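(* Let $\Gamma$ be a finite normal-form game and let $\vec\sigma$ be a non-degenerate Nash equilibrium of $\Gamma$. Then $\vec\sigma$ is strongly punishable: for every $\epsilon>0$ there exists $\delta>0$ such that for every game $\Gamma'=(P,A,U')$ with $d(\Gamma,\Gamma')<\delta$ there is a Nash equilibrium $\vec\sigma'$ of $\Gamma'$ with $\sigma_i'(A_i)=\sigma_i(A_i)$ for all $i\in P$ and $u_i'(\vec\sigma')-u_i(\vec\sigma)<\epsilon$ for all $i\in P$.
   Context: A finite normal-form game is $\Gamma=(P,A,U)$ with players $P=\{1,\dots,n\}$, action profiles $A=A_1\times\cdots\times A_n$ where $A_i=\{a_i^1,\dots,a_i^{N_i}\}$ is finite, and $U=(u_1,\dots,u_n)$ with $u_i:A\to\mathbb R$. Utilities are extended to mixed strategy profiles by expectation; $\sigma_i^j$ denotes the probability that $\sigma_i$ assigns to $a_i^j$, and $\sigma_i(A_i)$ the support of $\sigma_i$. The distance between games $\Gamma=(P,A,U)$ and $\Gamma'=(P',A',U')$ is $d(\Gamma,\Gamma')=+\infty$ if $P\neq P'$ or $A\neq A'$, and $d(\Gamma,\Gamma')=\max_{i\in P,\vec a\in A}|u_i(\vec a)-u_i'(\vec a)|$ otherwise. Non-degeneracy: let $\vec\sigma$ be a Nash equilibrium with actions labelled so that $\sigma_i(A_i)=\{a_i^1,\dots,a_i^{M_i}\}$. For variables $\vec p=(p_i^k)_{i\in P,\,1\le k\le M_i}$ write $u_i(a,\vec p_{-i}):=\sum u_i(a,(a_j^{k_j})_{j\ne i})\prod_{j\neq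 i}p_j^{k_j}$, the sum over all choices $k_j\le M_j$ ($j\ne i$). The characteristic function $f_{\vec\sigma}:\mathbb R^{\sum_i M_i}\to\mathbb R^{\sum_i M_i}$ has components $\sum_{k=1}^{M_i}p_i^k$ for each $i\in P$, and $u_i(a_i^1,\vec p_{-i})-u_i(a_i^k,\vec p_{-i})$ for each $i\in P$ and $2\le k\le M_i$. The residual function $r_{\vec\sigma}$ has components $u_i(a_i^1,\vec p_{-i})-u_i(a_i^k,\vec p_{-i})$ for each $i\in P$ and $M_i<k\le N_i$. $\vec\sigma$ is non-degenerate if the Jacobian determinant $|Df_{\vec\sigma}(\vec\sigma)|\neq 0$ (evaluating at the vector of probabilities of $\vec\sigma$) and every component of $r_{\vec\sigma}(\vec\sigma)$ is strictly positive. *)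

From HB Require Import structures.
From mathcomp Require Import all_boot all_order all_algebra.
From mathcomp Require Import all_classical all_reals all_analysis.
Set Implicit Arguments. Unset Strict Implicit. Unset Printing Implicit Defensive.
Import Order.TTheory GRing.Theory Num.Theory.
Local Open Scope ring_scope.

(* A game with players I and actions A is given by its utility functions   *)
(* u : I -> profile -> R.  (Games with different P or A are at distance     *)
(* +oo, so only games on the same (I, A) can be delta-close.)               *)

Definition profile (I : finType) (A : I -> finType) := {dffun forall i, A i}.

Definition game_dist (R : realType) (I : finType) (A : I -> finType)
  (u u' : I -> profile A -> R) : R :=
  \big[Num.max/0]_(i : I) \big[Num.max/0]_(a : profile A) `|u i a - u' i a|.

Definition mixed (R : realType) (I : finType) (A : I -> finType)
  (sigma : forall i, A i -> R) : Prop :=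
  (forall i a, 0 <= sigma i a) /\ (forall i, \sum_(a : A i) sigma i a = 1).

Definition mixed_i (R : realType) (I : finType) (A : I -> finType) (i : I)
  (tau : A i -> R) : Prop :=
  (forall a, 0 <= tau a) /\ \sum_(a : A i) tau a = 1.

Definition EU (R : realType) (I : finType) (A : I -> finType)
  (u : I -> profile A -> R) (sigma : forall i, A i -> R) (i : I) : R :=
  \sum_(b : profile A) u i b * \prod_(j : I) sigma j (b j).

Definition EUdev (R : realType) (I : finType) (A : I -> finType)
  (u : I -> profile A -> R) (q : forall i, A i -> R) (i : I) (a : A i) : R :=
  \sum_(b : profile A | b i == a) u i b * \prod_(j : I | j != i) q j (b j).

Definition nash_eq (R : realType) (I : finType) (A : I -> finType)
  (u : I -> profile A -> R) (sigma : forall i, A i -> R) : Prop :=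
  mixed sigma /\
  forall (i : I) (tau : A i -> R), mixed_i tau ->
    EU u (@dfwith I (fun j => A j -> R) sigma i tau) i <= EU u sigma i.

Definition suppT (R : realType) (I : finType) (A : I -> finType)
  (sigma : forall i, A i -> R) : {pred {i : I & A i}} :=
  [pred x | 0 < sigma (tag x) (tagged x)].

Definition nvars (R : realType) (I : finType) (A : I -> finType)
  (sigma : forall i, A i -> R) : nat := #|suppT sigma|.

Definition var_of (R : realType) (I : finType) (A : I -> finType)
  (sigma : forall i, A i -> R) (r : 'I_(nvars sigma)) : {i : I & A i} :=
  @enum_val _ (suppT sigma) r.

Definition pfun (R : realType) (I : finType) (A : I -> finType)
  (sigma : forall i, A i -> R) (p : 'rV[R]_(nvars sigma)) : forall i, A i -> R :=
  fun i a => \sum_(r < nvars sigma | var_of r == Tagged A a) p 0 r.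

(* the characteristic function f_sigma; ref i plays the role of a_i^1.
   Component indexed by (i,a): sum_{b in supp sigma_i} p_i^b if a = ref i,
   and u_i(ref i, p_{-i}) - u_i(a, p_{-i}) otherwise. *)
Definition charf (R : realType) (I : finType) (A : I -> finType)
  (u : I -> profile A -> R) (sigma : forall i, A i -> R) (ref : forall i, A i)
  (p : 'rV[R]_(nvars sigma)) : 'rV[R]_(nvars sigma) :=
  \row_r (let x := var_of r in
          if tagged x == ref (tag x) then
            \sum_(b : A (tag x) | 0 < sigma (tag x) b) pfun p b
          else EUdev u (pfun p) (ref (tag x)) - EUdev u (pfun p) (tagged x)).

Definition sigvec (R : realType) (I : finType) (A : I -> finType)
  (sigma : forall i, A i -> R) : 'rV[R]_(nvars sigma) :=
  \row_r sigma (tag (var_of r)) (tagged (var_of r)).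

Definition char_jacobian (R : realType) (I : finType) (A : I -> finType)
  (u : I -> profile A -> R) (sigma : forall i, A i -> R) (ref : forall i, A i)
  : 'M[R]_(nvars sigma) :=
  \matrix_(r, c)
    derive1 (fun t : R => charf u ref (sigvec sigma + t *: delta_mx 0 c) 0 r) 0.

(* non-degenerate Nash equilibrium (for some labelling of the actions making
   the support {a_i^1..a_i^{M_i}}, with ref i = a_i^1) *)
Definition nondeg_NE (R : realType) (I : finType) (A : I -> finType)
  (u : I -> profile A -> R) (sigma : forall i, A i -> R) : Prop :=
  nash_eq u sigma /\
  exists ref : forall i, A i,
    (forall i, 0 < sigma i (ref i)) /\
    \det (char_jacobian u sigma ref) != 0 /\
    (forall (i : I) (a : A i), ~~ (0 < sigma i a) ->
       0 < EUdev u sigma (ref i) - EUdev u sigma a).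

From HB Require Import structures.
From mathcomp Require Import all_boot all_order all_algebra.
From mathcomp Require Import all_classical all_reals all_analysis.
From mathcomp Require Import ring lra.
Set Implicit Arguments. Unset Strict Implicit. Unset Printing Implicit Defensive.
Import Order.TTheory GRing.Theory Num.Theory.
Local Open Scope ring_scope.

(* The characteristic function [charf w] of a game [w] is affine in each
   variable and depends Lipschitz-continuously on the utilities, uniformly near
   [sigma].  Non-degeneracy makes the Jacobian [J] of [charf u] at [sigma] invertible,
   so for [w] close to [u] the map [p |-> p - (charf w p - charf u sigma) J^-1] is a
   contraction of a small ball around [sigma], and Banach's fixed point theorem gives
   [p] with [charf w p = charf u sigma]: on each support, [p] sums to one and makes the
   player indifferent.  Being close to [sigma], [p] is positive exactly on the support
   of [sigma], and the strict residual inequalities survive the perturbation, so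
   actions outside the support remain worse: [p] is an equilibrium of [w] with the
   same supports and nearly the same payoffs. *)

Lemma size_index_enum (T : finType) : size (index_enum T) = #|T|.
Proof. by rewrite cardT enumT. Qed.

Lemma prod_affine_in_one (R : comPzRingType) (J : finType) (P : pred J)
    (X Y : J -> R) (j0 : J) (t : R) :
  (forall j, j != j0 -> Y j = 0) ->
  \prod_(j | P j) (X j + t * Y j) =
  \prod_(j | P j) X j + t * (\prod_(j | P j) (X j + Y j) - \prod_(j | P j) X j).
Proof.
move=> Y0.
have E c : \prod_(j | P j) (X j + c * Y j) =
    (if P j0 then X j0 + c * Y j0 else 1) * \prod_(j | P j && (j != j0)) X j.
  have -> : \prod_(j | P j && (j != j0)) X j =
            \prod_(j | P j && (j != j0)) (X j + c * Y j).
    by apply: eq_bigr => j /andP[_ /Y0 ->]; rewrite mulr0 addr0.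
  case: ifP => Pj0; first by rewrite (bigD1 j0).
  rewrite mul1r; apply: eq_bigl => j.
  by case: (eqVneq j j0) => [->|_]; rewrite ?Pj0 ?andbT.
have -> : \prod_(j | P j) X j = \prod_(j | P j) (X j + 0 * Y j).
  by apply: eq_bigr => j _; rewrite mul0r addr0.
have -> : \prod_(j | P j) (X j + Y j) = \prod_(j | P j) (X j + 1 * Y j).
  by apply: eq_bigr => j _; rewrite mul1r.
by rewrite !E; case: (P j0); ring.
Qed.

Section ProductBounds.
Variable R : realDomainType.

Lemma prod_norm_le (J : Type) (l : seq J) (P : pred J) (X : J -> R) (B : R) :
  1 <= B -> (forall j, `|X j| <= B) -> `|\prod_(j <- l | P j) X j| <= B ^+ size l.
Proof.
move=> B1 HX; elim: l => [|j l IH]; first by rewrite big_nil normr1 expr0.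
rewrite big_cons /= exprS; case: (P j).
  by rewrite normrM; apply: ler_pM.
by apply: (le_trans IH); rewrite ler_peMl // exprn_ge0 // (le_trans _ B1).
Qed.

Lemma prod_dist_le (J : Type) (l : seq J) (P : pred J) (X Y : J -> R) (B rho : R) :
  1 <= B -> 0 <= rho -> (forall j, `|X j| <= B) -> (forall j, `|Y j| <= B) ->
  (forall j, `|X j - Y j| <= rho) ->
  `|\prod_(j <- l | P j) X j - \prod_(j <- l | P j) Y j| <= (size l)%:R * B ^+ size l * rho.
Proof.
move=> B1 r0 HX HY HXY; have B0 : 0 <= B by apply: le_trans B1.
elim: l => [|j l IH]; first by rewrite !big_nil subrr normr0 !mul0r.
have Bl : 0 <= B ^+ size l by apply: exprn_ge0.
rewrite !big_cons /=; case: (P j); last first.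
  apply: (le_trans IH); apply: ler_wpM2r => //.
  by apply: ler_pM => //; rewrite ?ler_nat // exprS ler_peMl.
set PX := \prod_(j <- l | P j) X j; set PY := \prod_(j <- l | P j) Y j.
have -> : X j * PX - Y j * PY = X j * (PX - PY) + (X j - Y j) * PY by ring.
have HPY : `|PY| <= B ^+ size l by apply: prod_norm_le.
apply: (le_trans (ler_normD _ _)); rewrite !normrM.
apply: le_trans (lerD (ler_pM (normr_ge0 _) (normr_ge0 _) (HX j) IH)
                      (ler_pM (normr_ge0 _) (normr_ge0 _) (HXY j) HPY)) _.
have : rho * B ^+ size l <= rho * (B * B ^+ size l) by rewrite ler_wpM2l // ler_peMl.
rewrite exprS -natr1; nra.
Qed.

End ProductBounds.

Lemma fin_pos_lower_bound (R : realDomainType) (T : finType) (P : pred T) (f : T -> R) :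
  (forall x, P x -> 0 < f x) -> exists2 m, 0 < m & forall x, P x -> m <= f x.
Proof.
move=> f_gt0; exists (\big[Num.min/1]_(x | P x) f x).
  by apply: (big_ind (fun y => 0 < y)) => // y z hy hz; rewrite lt_min hy hz.
by move=> x Px; rewrite (bigD1 x) //= ge_min lexx.
Qed.

Lemma derive1_affine (R : realType) (a b : R) :
  derive1 (fun t : R => a + t * b) 0 = b.
Proof.
rewrite derive1E.
have -> : (fun t : R => a + t * b) = cst a + b \o* id by [].
by rewrite deriveD // derive_cst add0r deriveMr // derive_id mulr1.
Qed.

Section Game.
Variables (R : realType) (I : finType) (A : I -> finType).
Implicit Types (w : I -> profile A -> R) (q : forall i, A i -> R).

Lemma EU_decomp w q i : EU w q i = \sum_(a : A i) q i a * EUdev w q a.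
Proof.
rewrite /EU /EUdev (partition_big (fun b : profile A => b i) xpredT) //=.
apply: eq_bigr => a _; rewrite mulr_sumr; apply: eq_bigr => b /eqP <-.
by rewrite (bigD1 i) //=; ring.
Qed.

Lemma eq_EUdev w q q' i (a : A i) : (forall j b, q j b = q' j b) ->
  EUdev w q a = EUdev w q' a.
Proof. by move=> Hq; apply: eq_bigr => b _; congr (_ * _); apply: eq_bigr. Qed.

Lemma EUdev_dfwith w q i (tau : A i -> R) (a : A i) :
  EUdev w (@dfwith I (fun j => A j -> R) q i tau) a = EUdev w q a.
Proof.
apply: eq_bigr => b _; congr (_ * _); apply: eq_bigr => j ji.
by rewrite dfwithout // eq_sym.
Qed.

Lemma EUdev_affine w q (E : forall i, A i -> R) (j0 : I) (t : R) i (a : A i) :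
  (forall j b, j != j0 -> E j b = 0) ->
  EUdev w (fun j b => q j b + t * E j b) a =
  EUdev w q a + t * (EUdev w (fun j b => q j b + E j b) a - EUdev w q a).
Proof.
move=> E0; rewrite /EUdev -sumrB mulr_sumr -big_split; apply: eq_bigr => b _ /=.
rewrite (@prod_affine_in_one _ _ _ (fun j => q j (b j)) (fun j => E j (b j)) j0 t);
  first ring.
by move=> j; apply: E0.
Qed.

Lemma mixed_le1 q : mixed q -> forall i a, q i a <= 1.
Proof.
move=> [q_ge0 q_sum1] i a; rewrite -(q_sum1 i) (bigD1 a) //= lerDl.
exact: sumr_ge0.
Qed.

Lemma mixed_eq0 q i (a : A i) : mixed q -> ~~ (0 < q i a) -> q i a = 0.
Proof. by move=> [q_ge0 _] qa; apply/eqP; rewrite eq_le q_ge0 andbT leNgt. Qed.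

Lemma EU_dfwith_le w q i (tau : A i -> R) (v : R) : mixed_i tau ->
  (forall a : A i, EUdev w q a <= v) ->
  EU w (@dfwith I (fun j => A j -> R) q i tau) i <= v.
Proof.
move=> [tau_ge0 tau_sum1] Hv; rewrite EU_decomp.
apply: (@le_trans _ _ (\sum_(a : A i) tau a * v)); last by rewrite -mulr_suml tau_sum1 mul1r.
by apply: ler_sum => a _; rewrite dfwithin EUdev_dfwith ler_wpM2l.
Qed.

(* Deviating to the pure strategy [c] gives [EUdev w q c <= EU w q i]; as [EU w q i] is the
   [q i]-average of the [EUdev w q], equality must hold on the support. *)
Lemma nash_support w q : nash_eq w q ->
  forall i (a b : A i), 0 < q i a -> EUdev w q b <= EUdev w q a.
Proof.
move=> [[q_ge0 q_sum1] Hnash] i a b qa.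
set m := EU w q i.
have Hle (c : A i) : EUdev w q c <= m.
  pose tau := fun d : A i => ((d == c)%:R : R).
  have Htau : mixed_i tau.
    split=> [d|]; first by rewrite /tau ler0n.
    by rewrite (bigD1 c) //= /tau eqxx big1 ?addr0 // => d /negbTE ->.
  have := Hnash i tau Htau; rewrite EU_decomp (bigD1 c) //= big1 ?addr0; last first.
    by move=> d dc; rewrite dfwithin /tau (negbTE dc) mul0r.
  by rewrite dfwithin /tau eqxx mul1r EUdev_dfwith.
have Hsum : \sum_(c : A i) q i c * (m - EUdev w q c) = 0.
  by rewrite (eq_bigr _ (fun c _ => mulrBr _ _ _)) sumrB -mulr_suml q_sum1 mul1r
             /m EU_decomp subrr.
have Hnn (c : A i) : true -> 0 <= q i c * (m - EUdev w q c).
  by move=> _; rewrite mulr_ge0 // subr_ge0.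
have /eqP := @psumr_eq0P _ _ _ _ Hnn Hsum a isT.
by rewrite mulf_eq0 (gt_eqF qa) /= subr_eq0 => /eqP <-.
Qed.

Lemma EU_support w q i (a : A i) : nash_eq w q -> 0 < q i a -> EU w q i = EUdev w q a.
Proof.
move=> Hnash qa; have [[_ q_sum1] _] := Hnash.
rewrite EU_decomp -[RHS]mul1r -(q_sum1 i) mulr_suml; apply: eq_bigr => b _.
have [qb|qb] := boolP (0 < q i b); last by rewrite (mixed_eq0 Hnash.1 qb) !mul0r.
by congr (_ * _); apply/eqP; rewrite eq_le !(nash_support Hnash).
Qed.

Lemma nash_eq_of_support w q : mixed q ->
  (forall i (a b : A i), 0 < q i a -> EUdev w q b <= EUdev w q a) -> nash_eq w q.
Proof.
move=> Hq Hsupp; split=> // i tau Htau; apply: EU_dfwith_le => // b.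
rewrite EU_decomp -[leLHS]mul1r -(Hq.2 i) mulr_suml; apply: ler_sum => a _.
have [qa|qa] := boolP (0 < q i a); first by rewrite ler_wpM2l ?Hq.1 ?Hsupp.
by rewrite (mixed_eq0 Hq qa) !mul0r.
Qed.

End Game.

Section MatrixNorm.
Variable R : realType.

Lemma mx_entry_le_norm (m k : nat) (M : 'M[R]_(m, k)) i j : `|M i j| <= `|M|.
Proof.
rewrite [leRHS]/Num.Def.normr /= mx_normrE.
exact: (le_bigmax _ (fun ij : 'I_m * 'I_k => `|M ij.1 ij.2|) (i, j)).
Qed.

Lemma mx_norm_le (m k : nat) (M : 'M[R]_(m, k)) (e : R) :
  0 <= e -> (forall i j, `|M i j| <= e) -> `|M| <= e.
Proof.
by move=> e0 HM; rewrite /Num.Def.normr /= mx_normrE; apply: bigmax_le => // -[i j] _.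
Qed.

Lemma mulmx_row_norm_le (m : nat) (E : 'rV[R]_m) (K : 'M[R]_m) :
  `|E *m K| <= m%:R * `|K| * `|E|.
Proof.
apply: mx_norm_le; first by rewrite !mulr_ge0.
move=> i c; rewrite mxE; apply: (le_trans (ler_norm_sum _ _ _)).
apply: (@le_trans _ _ (\sum_(r < m) `|K| * `|E|)).
  by apply: ler_sum => r _; rewrite normrM mulrC ler_pM ?mx_entry_le_norm.
by rewrite sumr_const card_ord -mulr_natl; nra.
Qed.

Definition row_prefix (m : nat) (p q : 'rV[R]_m) (k : nat) : 'rV[R]_m :=
  \row_j (if (j < k)%N then p 0 j else q 0 j).

Lemma row_prefix_dist (m : nat) (p q s : 'rV[R]_m) (rho : R) (k : nat) :
  `|p - s| <= rho -> `|q - s| <= rho -> `|row_prefix p q k - s| <= rho.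
Proof.
move=> hp hq; apply: mx_norm_le; first exact: le_trans (normr_ge0 _) hp.
move=> i j; rewrite !mxE (ord1 i).
case: ifP => _; [apply: le_trans hp | apply: le_trans hq].
  by have := mx_entry_le_norm (p - s) 0 j; rewrite !mxE.
by have := mx_entry_le_norm (q - s) 0 j; rewrite !mxE.
Qed.

HB.instance Definition _ (m k : nat) := Complete.on 'M[R]_(m, k).

Lemma contraction_fixpoint_in_ball (n : nat) (s : 'rV[R]_n) (rho : R)
    (G : 'rV[R]_n -> 'rV[R]_n) : 0 < rho ->
  (forall p, `|s - p| <= rho -> `|s - G p| <= rho) ->
  (forall p q, `|s - p| <= rho -> `|s - q| <= rho -> `|G p - G q| <= 2^-1 * `|p - q|) ->
  exists p, `|s - p| <= rho /\ G p = p.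
Proof.
move=> rho0 G_ball G_contr.
pose U := @closed_ball _ ('rV[R]_n : completeNormedModType R) s rho.
have UE : U = (fun p : 'rV[R]_n => `|s - p| <= rho) by rewrite /U closed_ballE.
have G_U : {homo G : x / U x >-> U x} by move=> x; rewrite UE; exact: G_ball.
have half_ge0 : (0 : R) <= 2^-1 by [].
have ctr : is_contraction (mkfun G_U : {fun U >-> U}).
  exists (NngNum half_ge0); split; first by rewrite /= invf_lt1 // ltr1n.
  by move=> [x y] /= [Ux Uy]; rewrite UE in Ux Uy; exact: G_contr.
have [|p Up Gp] := banach_fixed_point ctr
    (@closed_ball_closed _ ('rV[R]_n : completeNormedModType R) s rho).
  by exists s; rewrite UE /= subrr normr0 ltW.
by exists p; split; [move: Up; rewrite UE | rewrite {2}Gp].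
Qed.

End MatrixNorm.

Section Support.
Variables (R : realType) (I : finType) (A : I -> finType) (sigma : forall i, A i -> R).
Arguments sigma : clear implicits.
Local Notation n := (nvars sigma).
Local Notation V := 'rV[R]_(nvars sigma).

Lemma var_of_supp i (a : A i) : 0 < sigma i a -> exists r : 'I_n, var_of r = Tagged A a.
Proof.
move=> sa; have Hin : Tagged A a \in suppT sigma by rewrite inE.
by exists (enum_rank_in Hin (Tagged A a)); rewrite /var_of enum_rankK_in.
Qed.

Lemma pfun_var (p : V) (r : 'I_n) i (a : A i) : var_of r = Tagged A a -> pfun p a = p 0 r.
Proof.
move=> Hr; rewrite /pfun -Hr (big_pred1 r) // => r'.
by apply/eqP/eqP => [/enum_val_inj|->].
Qed.

Lemma pfun_out (p : V) i (a : A i) : ~~ (0 < sigma i a) -> pfun p a = 0.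
Proof.
move=> sa; rewrite /pfun big_pred0 // => r; apply/negbTE/eqP => Hr.
by have := enum_valP r; rewrite /var_of in Hr; rewrite Hr => /(negP sa).
Qed.

Lemma pfun_sigvec i (a : A i) : mixed sigma -> pfun (sigvec sigma) a = sigma i a.
Proof.
move=> Hmix; have [sa|sa] := boolP (0 < sigma i a).
  by have [r Hr] := var_of_supp sa; rewrite (pfun_var _ Hr) mxE Hr.
by rewrite pfun_out // (mixed_eq0 Hmix sa).
Qed.

Lemma pfunD (p q : V) i (a : A i) : pfun (p + q) a = pfun p a + pfun q a.
Proof. by rewrite /pfun -big_split; apply: eq_bigr => r _; rewrite mxE. Qed.

Lemma pfunZ (t : R) (p : V) i (a : A i) : pfun (t *: p) a = t * pfun p a.
Proof. by rewrite /pfun mulr_sumr; apply: eq_bigr => r _; rewrite mxE. Qed.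

Lemma pfun_delta (c : 'I_n) j (b : A j) : j != tag (var_of c) ->
  pfun (delta_mx 0 c : V) b = 0.
Proof.
move=> jc; have [sb|sb] := boolP (0 < sigma j b); last exact: pfun_out.
have [r Hr] := var_of_supp sb; rewrite (pfun_var _ Hr) mxE /=.
by case: eqP => // rc; move: jc; rewrite -rc Hr eqxx.
Qed.

Lemma pfun_dist (p q : V) i (a : A i) : `|pfun p a - pfun q a| <= `|p - q|.
Proof.
have [sa|sa] := boolP (0 < sigma i a); last by rewrite !pfun_out // subrr normr0.
have [r Hr] := var_of_supp sa; rewrite !(pfun_var _ Hr).
by have := mx_entry_le_norm (p - q) 0 r; rewrite !mxE.
Qed.

Lemma pfun_norm (p : V) i (a : A i) : `|pfun p a| <= `|p|.
Proof.
have pfun0 : pfun (0 : V) a = 0 by rewrite -(scale0r 0) pfunZ mul0r.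
by have := pfun_dist p 0 a; rewrite pfun0 !subr0.
Qed.

Lemma sigvec_norm : mixed sigma -> `|sigvec sigma| <= 1.
Proof.
move=> Hmix; apply: mx_norm_le => // i r; rewrite mxE ger0_norm ?Hmix.1 //.
exact: mixed_le1.
Qed.

End Support.

Section UtilityPerturbation.
Variables (R : realType) (I : finType) (A : I -> finType).

Definition util_norm (u : I -> profile A -> R) : R := \sum_i \sum_(b : profile A) `|u i b|.

Definition EUdev_lip (u : I -> profile A -> R) : R :=
  #|profile A|%:R * 3 ^+ #|I| * (1 + util_norm u * #|I|%:R).

Lemma util_norm_ge0 u : 0 <= util_norm u.
Proof. by apply: sumr_ge0 => i _; apply: sumr_ge0. Qed.

Lemma util_le_norm u i b : `|u i b| <= util_norm u.
Proof.
rewrite /util_norm (bigD1 i) //= (bigD1 b) //= -addrA lerDl.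
by rewrite addr_ge0 ?sumr_ge0 // => j _; apply: sumr_ge0.
Qed.

Lemma EUdev_lip_ge0 u : 0 <= EUdev_lip u.
Proof.
by rewrite /EUdev_lip !mulr_ge0 ?exprn_ge0 // addr_ge0 // mulr_ge0 ?util_norm_ge0.
Qed.

Lemma utility_le_game_dist (u w : I -> profile A -> R) i b :
  `|w i b - u i b| <= game_dist u w.
Proof.
rewrite distrC /game_dist.
apply: le_trans (le_bigmax _ (fun a => `|u i a - w i a|) b) _.
exact: (le_bigmax _ (fun j => \big[Num.max/0]_(a : profile A) `|u j a - w j a|) i).
Qed.

Lemma EUdev_close u w (q y : forall i, A i -> R) (rho delta : R) i (a : A i) :
  0 <= rho -> rho <= 1 -> 0 <= delta ->
  (forall i b, `|w i b - u i b| <= delta) ->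
  (forall j b, `|y j b| <= 2) -> (forall j b, `|q j b - y j b| <= rho) ->
  `|EUdev w q a - EUdev u y a| <= EUdev_lip u * (rho + delta).
Proof.
move=> r0 r1 d0 Hw Hy Hqy.
have Hq j b : `|q j b| <= 3.
  rewrite -[q j b](subrK (y j b)); apply: (le_trans (ler_normD _ _)).
  by have := Hqy j b; have := Hy j b; lra.
have one_le3 : (1 : R) <= 3 by lra.
have hC := util_norm_ge0 u; have hn : (0 : R) <= #|I|%:R by [].
have B0 : (0 : R) <= 3 ^+ #|I| by apply: exprn_ge0.
set c := 3 ^+ #|I| * (1 + util_norm u * #|I|%:R) * (rho + delta).
have c0 : 0 <= c by rewrite /c !mulr_ge0 ?addr_ge0 ?mulr_ge0.
have Hb (b : profile A) :
    `|w i b * \prod_(j | j != i) q j (b j) - u i b * \prod_(j | j != i) y j (b j)| <= c.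
  set PQ := \prod_(j | j != i) q j (b j); set PY := \prod_(j | j != i) y j (b j).
  have -> : w i b * PQ - u i b * PY = (w i b - u i b) * PQ + u i b * (PQ - PY) by ring.
  have hPQ : `|PQ| <= 3 ^+ #|I| by rewrite -size_index_enum; apply: prod_norm_le.
  have hD : `|PQ - PY| <= #|I|%:R * 3 ^+ #|I| * rho.
    rewrite -size_index_enum; apply: prod_dist_le => // j.
    by apply: le_trans (Hy _ _) _; lra.
  apply: (le_trans (ler_normD _ _)); rewrite !normrM.
  have h1 := ler_pM (normr_ge0 _) (normr_ge0 _) (Hw i b) hPQ.
  have h2 := ler_pM (normr_ge0 _) (normr_ge0 _) (util_le_norm u i b) hD.
  apply: (le_trans (lerD h1 h2)); rewrite /c.
  set K := 3 ^+ #|I| in B0 *; set C := util_norm u; set N := #|I|%:R in hn *.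
  have e1 : 0 <= C * N * K * delta by rewrite !mulr_ge0.
  have e2 : 0 <= K * rho by rewrite mulr_ge0.
  nra.
rewrite /EUdev -sumrB; apply: (le_trans (ler_norm_sum _ _ _)).
apply: (le_trans (ler_sum _ (fun b _ => Hb b))).
apply: (@le_trans _ _ (\sum_(b : profile A) c)).
  by rewrite [leRHS](bigID (fun b : profile A => b i == a)) /= lerDl sumr_ge0.
rewrite sumr_const -mulr_natl /EUdev_lip /c -!mulrA.
apply: ler_wpM2r; first by move: c0; rewrite /c -!mulrA.
by rewrite ler_nat max_card.
Qed.

End UtilityPerturbation.

Section CharacteristicFunction.
Variables (R : realType) (I : finType) (A : I -> finType) (sigma : forall i, A i -> R).
Arguments sigma : clear implicits.
Variable ref : forall i, A i.
Local Notation n := (nvars sigma).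
Local Notation V := 'rV[R]_(nvars sigma).
Implicit Types (u w : I -> profile A -> R) (p q : V).

Lemma EUdev_pfun_affine w p (c : 'I_n) (t : R) i (a : A i) :
  EUdev w (pfun (p + t *: delta_mx 0 c)) a = EUdev w (pfun p) a +
    t * (EUdev w (pfun (p + delta_mx 0 c)) a - EUdev w (pfun p) a).
Proof.
rewrite (@eq_EUdev _ _ _ w _ (fun j b => pfun p b + t * pfun (delta_mx 0 c : V) b));
  last by move=> j b; rewrite pfunD pfunZ.
rewrite (@EUdev_affine _ _ _ w _ _ (tag (var_of c))); last by move=> j b; apply: pfun_delta.
by congr (_ + _ * (_ - _)); apply: eq_EUdev => j b; rewrite pfunD.
Qed.

Lemma charf_affine w p (c : 'I_n) (t : R) (r : 'I_n) :
  charf w ref (p + t *: delta_mx 0 c) 0 r =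
  charf w ref p 0 r + t * (charf w ref (p + delta_mx 0 c) 0 r - charf w ref p 0 r).
Proof.
rewrite !mxE /=; case: ifP => _; last by rewrite !EUdev_pfun_affine; ring.
rewrite -sumrB mulr_sumr -big_split; apply: eq_bigr => b _ /=.
by rewrite !pfunD pfunZ; ring.
Qed.

(* [charf] is affine in each single variable, so its partial derivatives are differences. *)
Lemma char_jacobianE u (r c : 'I_n) :
  char_jacobian u sigma ref r c =
  charf u ref (sigvec sigma + delta_mx 0 c) 0 r - charf u ref (sigvec sigma) 0 r.
Proof.
rewrite /char_jacobian mxE.
under eq_fun do rewrite charf_affine.
exact: derive1_affine.
Qed.

Lemma charf_sub_telescope w p q (r : 'I_n) :
  charf w ref p 0 r - charf w ref q 0 r =
  \sum_(c < n) (p 0 c - q 0 c) *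
     (charf w ref (row_prefix p q c + delta_mx 0 c) 0 r - charf w ref (row_prefix p q c) 0 r).
Proof.
have Zn : row_prefix p q n = p by apply/rowP => j; rewrite !mxE ltn_ord.
have Z0 : row_prefix p q 0 = q by apply/rowP => j; rewrite !mxE.
have ZS (c : 'I_n) :
    row_prefix p q c.+1 = row_prefix p q c + (p 0 c - q 0 c) *: delta_mx 0 c.
  apply/rowP => j; rewrite !mxE ltnS leq_eqVlt.
  case: (eqVneq j c) => [->|jc]; first by rewrite eqxx ltnn /= mulr1; ring.
  by rewrite (_ : (j == c :> nat) = false) ?mulr0 ?addr0 //; exact: negbTE jc.
rewrite -{1}Z0 -{1}Zn.
rewrite -(telescope_sumr (fun k => charf w ref (row_prefix p q k) 0 r) (leq0n n)) big_mkord.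
by apply: eq_bigr => c _; rewrite ZS charf_affine; ring.
Qed.

Definition charf_lip u : R := 2 * EUdev_lip u + \sum_i (#|A i|%:R : R).

Lemma charf_lip_ge0 u : 0 <= charf_lip u.
Proof. by rewrite addr_ge0 ?sumr_ge0 // mulr_ge0 ?EUdev_lip_ge0. Qed.

Lemma charf_close u w (x y : V) (rho delta : R) (r : 'I_n) :
  0 <= rho -> rho <= 1 -> 0 <= delta -> (forall i b, `|w i b - u i b| <= delta) ->
  `|y| <= 2 -> `|x - y| <= rho ->
  `|charf w ref x 0 r - charf u ref y 0 r| <= charf_lip u * (rho + delta).
Proof.
move=> r0 r1 d0 Hw Hy Hxy.
have hK := EUdev_lip_ge0 u.
have hA : 0 <= \sum_i (#|A i|%:R : R) by apply: sumr_ge0.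
rewrite !mxE /=; set i := tag (var_of r); case: ifP => _.
  have hcard : (#|A i|%:R : R) <= \sum_i (#|A i|%:R : R).
    by rewrite (bigD1 i) //= lerDl sumr_ge0.
  rewrite -sumrB; apply: (le_trans (ler_norm_sum _ _ _)).
  apply: (@le_trans _ _ (\sum_(b : A i) rho)).
    rewrite [leRHS](bigID (fun b => 0 < sigma i b)) /= ler_wpDr ?sumr_ge0 //.
    by apply: ler_sum => b _; apply: le_trans (pfun_dist _ _ _) Hxy.
  rewrite sumr_const -mulr_natl /charf_lip.
  have : (#|(xpredT : pred (A i))|%:R : R) <= #|A i|%:R by rewrite ler_nat max_card.
  nra.
set E1 := EUdev w _ _; set E2 := EUdev w _ _; set E3 := EUdev u _ _; set E4 := EUdev u _ _.
have -> : E1 - E2 - (E3 - E4) = (E1 - E3) - (E2 - E4) by ring.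
have Hyb j (b : A j) : `|pfun y b| <= 2 by apply: le_trans (pfun_norm _ _) Hy.
have Hxyb j (b : A j) : `|pfun x b - pfun y b| <= rho.
  exact: le_trans (pfun_dist _ _ _) Hxy.
have h1 : `|E1 - E3| <= EUdev_lip u * (rho + delta) by apply: EUdev_close.
have h2 : `|E2 - E4| <= EUdev_lip u * (rho + delta) by apply: EUdev_close.
apply: (le_trans (ler_normB _ _)); rewrite /charf_lip; nra.
Qed.

Lemma charf_linearization u w p q (rho delta : R) (r : 'I_n) :
  mixed sigma -> 0 <= rho -> rho <= 1 -> 0 <= delta ->
  (forall i b, `|w i b - u i b| <= delta) ->
  `|p - sigvec sigma| <= rho -> `|q - sigvec sigma| <= rho ->
  `|charf w ref p 0 r - charf w ref q 0 r - ((p - q) *m (char_jacobian u sigma ref)^T) 0 r|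
    <= n%:R * (2 * charf_lip u * (rho + delta)) * `|p - q|.
Proof.
move=> Hmix r0 r1 d0 Hw hp hq; set s := sigvec sigma.
have hs : `|s| <= 1 by apply: sigvec_norm.
have hK := charf_lip_ge0 u.
rewrite charf_sub_telescope [((p - q) *m _) 0 r]mxE.
under [X in _ - X]eq_bigr do rewrite [X in _ * X]mxE char_jacobianE [(p - q) _ _]mxE [(- q) _ _]mxE.
rewrite -sumrB; apply: (le_trans (ler_norm_sum _ _ _)).
apply: (@le_trans _ _ (\sum_(c < n) `|p - q| * (2 * charf_lip u * (rho + delta)))).
  apply: ler_sum => c _; rewrite -mulrBr normrM; apply: ler_pM => //.
    by have := mx_entry_le_norm (p - q) 0 c; rewrite !mxE.
  set X1 := charf w ref _ 0 r; set X2 := charf w ref _ 0 r.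
  set Y1 := charf u ref _ 0 r; set Y2 := charf u ref _ 0 r.
  have -> : X1 - X2 - (Y1 - Y2) = (X1 - Y1) - (X2 - Y2) by ring.
  have hZ := row_prefix_dist c hp hq.
  have hd : `|delta_mx 0 c : V| <= 1.
    by apply: mx_norm_le => // i j; rewrite mxE; case: (_ && _); rewrite ?normr1 ?normr0.
  have h1 : `|X1 - Y1| <= charf_lip u * (rho + delta).
    apply: charf_close => //; first by apply: le_trans (ler_normD _ _) _; lra.
    by rewrite opprD addrACA subrr addr0.
  have h2 : `|X2 - Y2| <= charf_lip u * (rho + delta) by apply: charf_close => //; lra.
  apply: (le_trans (ler_normB _ _)); lra.
by rewrite sumr_const card_ord -mulr_natl; nra.
Qed.

End CharacteristicFunction.

Lemma small_step_bounds (R : realFieldType) (B rho : R) :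
  1 <= B -> 0 < rho -> rho * (8 * B) <= 1 ->
  [/\ 0 <= rho / (8 * B), rho <= 1, B * (rho + rho / (8 * B)) <= 4^-1
    & 8 * (B * (rho / (8 * B))) = rho].
Proof.
move=> hB r0 hr; have B0 : 0 < B by apply: lt_le_trans ltr01 hB.
have hd : rho / (8 * B) * (8 * B) = rho by rewrite divfK // mulf_neq0 // gt_eqF.
have hd0 : 0 <= rho / (8 * B) by rewrite divr_ge0 ?ltW // mulr_gt0.
have r1 : rho <= 1 by nra.
split=> //; first nra.
by rewrite mulrA mulrC hd.
Qed.

Section Newton.
Variables (R : realType) (I : finType) (A : I -> finType) (sigma : forall i, A i -> R).
Arguments sigma : clear implicits.
Variables (u : I -> profile A -> R) (ref : forall i, A i).
Hypotheses (Hmix : mixed sigma) (HJ : \det (char_jacobian u sigma ref) != 0).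
Local Notation n := (nvars sigma).
Local Notation V := 'rV[R]_(nvars sigma).
Local Notation s := (sigvec sigma).
Local Notation J := (char_jacobian u sigma ref).

Definition jacobian_inv_norm : R := `|invmx J^T|.

Definition newton_const : R :=
  1 + 2 * charf_lip u * n%:R * n%:R * jacobian_inv_norm
    + n%:R * jacobian_inv_norm * charf_lip u.

Lemma newton_const_ge1 : 1 <= newton_const.
Proof.
rewrite /newton_const -addrA lerDl.
by rewrite addr_ge0 // !mulr_ge0 ?charf_lip_ge0 ?normr_ge0.
Qed.

Section NewtonMap.
Variables (w : I -> profile A -> R) (rho : R).
Hypotheses (rho_gt0 : 0 < rho) (rho_small : rho * (8 * newton_const) <= 1)
  (Hw : forall i b, `|w i b - u i b| <= rho / (8 * newton_const)).

(* Newton map for [charf w ref p = charf u ref s], with the Jacobian frozen at [s]. *)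
Let G (p : V) : V := p - (charf w ref p - charf u ref s) *m invmx J^T.

Lemma newton_contraction (p q : V) : `|s - p| <= rho -> `|s - q| <= rho ->
  `|G p - G q| <= 2^-1 * `|p - q|.
Proof.
move=> hp hq.
have -> : G p - G q = - ((charf w ref p - charf w ref q - (p - q) *m J^T) *m invmx J^T).
  have JT_unit : J^T \in unitmx by rewrite unitmxE det_tr unitfE.
  rewrite /G (mulmxBl (charf w ref p - charf w ref q)) -(mulmxA (p - q)) mulmxV //.
  rewrite mulmx1 !mulmxBl.
  move: (charf w ref p *m _) (charf w ref q *m _) (charf u ref s *m _) => a b t.
  by apply/rowP => j; rewrite !mxE; ring.
rewrite normrN; apply: le_trans (mulmx_row_norm_le _ _) _; rewrite -/jacobian_inv_norm.
have hL := charf_lip_ge0 u; have hK : 0 <= jacobian_inv_norm by apply: normr_ge0.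
have hn : (0 : R) <= n%:R by [].
set delta := rho / (8 * newton_const).
have [hd0 r1 hsmall _] := small_step_bounds newton_const_ge1 rho_gt0 rho_small.
have hE : `|charf w ref p - charf w ref q - (p - q) *m J^T| <=
    n%:R * (2 * charf_lip u * (rho + delta)) * `|p - q|.
  apply: mx_norm_le; first by rewrite !mulr_ge0 // addr_ge0 // ltW.
  move=> i r; rewrite (ord1 i).
  have -> : (charf w ref p - charf w ref q - (p - q) *m J^T) 0 r =
      charf w ref p 0 r - charf w ref q 0 r - ((p - q) *m J^T) 0 r by rewrite !mxE.
  by apply: charf_linearization => //; [exact: ltW | rewrite distrC | rewrite distrC].
have hpq := normr_ge0 (p - q).
apply: le_trans (ler_wpM2l _ hE) _; first by rewrite mulr_ge0.
have hP : 2 * charf_lip u * n%:R * n%:R * jacobian_inv_norm <= newton_const.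
  have hQ : 0 <= n%:R * jacobian_inv_norm * charf_lip u by rewrite !mulr_ge0.
  by rewrite /newton_const; lra.
have : 2 * charf_lip u * n%:R * n%:R * jacobian_inv_norm * (rho + delta) <= 2^-1.
  apply: le_trans (ler_wpM2r _ hP) _; first by rewrite addr_ge0 // ltW.
  by apply: le_trans hsmall _; lra.
clearbody delta; set X := `|p - q| in hpq *; nra.
Qed.

Lemma newton_maps_ball (p : V) : `|s - p| <= rho -> `|s - G p| <= rho.
Proof.
move=> hp.
have [hd0 r1 _ hd8] := small_step_bounds newton_const_ge1 rho_gt0 rho_small.
set delta := rho / (8 * newton_const) in hd0 hd8.
have hL := charf_lip_ge0 u; have hK : 0 <= jacobian_inv_norm by apply: normr_ge0.
have hn : (0 : R) <= n%:R by [].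
have hsG : `|s - G s| <= n%:R * jacobian_inv_norm * charf_lip u * delta.
  have -> : s - G s = (charf w ref s - charf u ref s) *m invmx J^T.
    by rewrite /G opprB addrC subrK.
  apply: le_trans (mulmx_row_norm_le _ _) _; rewrite -/jacobian_inv_norm -[leRHS]mulrA ler_wpM2l ?mulr_ge0 //.
  apply: mx_norm_le => [|i r]; first by rewrite mulr_ge0.
  have -> : (charf w ref s - charf u ref s) i r = charf w ref s 0 r - charf u ref s 0 r.
    by rewrite (ord1 i) !mxE.
  rewrite -[delta]add0r.
  by apply: charf_close; rewrite ?subrr ?normr0 //; apply: le_trans (sigvec_norm Hmix) _; lra.
have hQ : n%:R * jacobian_inv_norm * charf_lip u <= newton_const.
  have hP : 0 <= 2 * charf_lip u * n%:R * n%:R * jacobian_inv_norm by rewrite !mulr_ge0.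
  by rewrite /newton_const; lra.
have hss : `|s - s| <= rho by rewrite subrr normr0 ltW.
have hc := newton_contraction hss hp.
have -> : s - G p = (s - G s) + (G s - G p) by rewrite addrA subrK.
apply: le_trans (ler_normD _ _) _.
apply: le_trans (lerD (le_trans hsG (ler_wpM2r hd0 hQ)) hc) _.
have r0 := rho_gt0; clearbody delta; lra.
Qed.

Lemma charf_perturbed_root : exists p : V, `|s - p| <= rho /\ charf w ref p = charf u ref s.
Proof.
have [p [hp Gp]] := contraction_fixpoint_in_ball rho_gt0 newton_maps_ball newton_contraction.
exists p; split=> //; apply/eqP; rewrite -subr_eq0; apply/eqP.
have JT_unit : J^T \in unitmx by rewrite unitmxE det_tr unitfE.
have X0 : (charf w ref p - charf u ref s) *m invmx J^T = 0.
  by move: (congr1 (fun x => p - x) Gp); rewrite /G opprB addrC subrK subrr.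
by rewrite -[_ - _]mulmx1 -(mulVmx JT_unit) mulmxA X0 mul0mx.
Qed.

End NewtonMap.

Lemma charf_locally_solvable : exists2 k : R, 1 <= k &
  forall (rho : R) (w : I -> profile A -> R), 0 < rho -> rho * k <= 1 ->
    (forall i b, `|w i b - u i b| <= rho / k) ->
    exists p : V, `|s - p| <= rho /\ charf w ref p = charf u ref s.
Proof.
exists (8 * newton_const); first by have := newton_const_ge1; lra.
by move=> rho w rho_gt0 rho_small Hw; apply: charf_perturbed_root.
Qed.
End Newton.

Section RootEquilibrium.
Variables (R : realType) (I : finType) (A : I -> finType) (sigma : forall i, A i -> R).
Arguments sigma : clear implicits.
Variables (u w : I -> profile A -> R) (ref : forall i, A i) (p : 'rV[R]_(nvars sigma)) (c : R).
Hypotheses (HN : nash_eq u sigma) (Href : forall i, 0 < sigma i (ref i))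
  (Hroot : charf w ref p = charf u ref (sigvec sigma))
  (Hpos : forall i (a : A i), 0 < sigma i a -> 0 < pfun p a)
  (Hclose : forall i (b : A i), `|EUdev w (pfun p) b - EUdev u sigma b| <= c)
  (Hgap : forall i (a : A i), ~~ (0 < sigma i a) ->
     2 * c < EUdev u sigma (ref i) - EUdev u sigma a).

Lemma charf_root_sum1 i : \sum_(a : A i) pfun p a = 1.
Proof.
have [r Hr] := var_of_supp (Href i).
have : charf w ref p 0 r = charf u ref (sigvec sigma) 0 r by rewrite Hroot.
rewrite !mxE /= Hr /= eqxx => E.
rewrite (bigID (fun b => 0 < sigma i b)) /= E [X in _ + X]big1 ?addr0; last first.
  by move=> b sb; apply: pfun_out.
rewrite -(HN.1.2 i) [RHS](bigID (fun b => 0 < sigma i b)) /= [X in _ = _ + X]big1 ?addr0.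
  by apply: eq_bigr => b _; apply: pfun_sigvec HN.1.
by move=> b sb; apply: mixed_eq0 HN.1 sb.
Qed.

Lemma charf_root_indifferent i (a : A i) : 0 < sigma i a ->
  EUdev w (pfun p) a = EUdev w (pfun p) (ref i).
Proof.
move=> sa; case: (eqVneq a (ref i)) => [->//|a_ref].
have [r Hr] := var_of_supp sa.
have : charf w ref p 0 r = charf u ref (sigvec sigma) 0 r by rewrite Hroot.
rewrite !mxE /= Hr /= (negbTE a_ref) => E.
have Es (b : A i) : EUdev u (pfun (sigvec sigma)) b = EUdev u sigma b.
  by apply: eq_EUdev => j d; apply: pfun_sigvec HN.1.
apply/eqP; rewrite eq_sym -subr_eq0 E !Es subr_eq0 eq_le.
by rewrite !(nash_support HN).
Qed.

Lemma off_support_worse i (a : A i) : ~~ (0 < sigma i a) ->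
  EUdev w (pfun p) a < EUdev w (pfun p) (ref i).
Proof.
move=> sa; have := Hgap sa; have := Hclose a; have := Hclose (ref i).
rewrite !ler_norml => /andP[h1 h2] /andP[h3 h4]; lra.
Qed.

Lemma support_charf_root i (a : A i) : (0 < pfun p a) = (0 < sigma i a).
Proof.
have [sa|sa] := boolP (0 < sigma i a); first exact: Hpos.
by rewrite pfun_out // ltxx.
Qed.

Lemma nash_charf_root : nash_eq w (pfun p).
Proof.
have Hmix : mixed (pfun p).
  split=> [i a|]; last exact: charf_root_sum1.
  by have [sa|sa] := boolP (0 < sigma i a); [apply/ltW/Hpos | rewrite pfun_out].
apply: nash_eq_of_support => // i a b; rewrite support_charf_root => sa.
rewrite (charf_root_indifferent sa).
have [sb|sb] := boolP (0 < sigma i b); first by rewrite (charf_root_indifferent sb).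
exact/ltW/off_support_worse.
Qed.

Lemma EU_charf_root_le i : EU w (pfun p) i - EU u sigma i <= c.
Proof.
rewrite (EU_support nash_charf_root (Hpos (Href i))) (EU_support HN (Href i)).
by have := Hclose (ref i); rewrite ler_norml => /andP[].
Qed.

End RootEquilibrium.

Lemma equilibrium_of_close_root (R : realType) (I : finType) (A : I -> finType)
    (u w : I -> profile A -> R) (sigma : forall i, A i -> R) (ref : forall i, A i)
    (p : 'rV[R]_(nvars sigma)) (rho m g : R) :
  nash_eq u sigma -> (forall i, 0 < sigma i (ref i)) ->
  (forall i (a : A i), 0 < sigma i a -> m <= sigma i a) ->
  (forall i (a : A i), ~~ (0 < sigma i a) -> g <= EUdev u sigma (ref i) - EUdev u sigma a) ->
  0 < rho -> rho <= 1 -> rho * 2 <= m -> rho * (4 * (1 + EUdev_lip u)) <= g ->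
  (forall i b, `|w i b - u i b| <= rho) ->
  `|sigvec sigma - p| <= rho -> charf w ref p = charf u ref (sigvec sigma) ->
  [/\ nash_eq w (pfun p), (forall i (a : A i), (0 < pfun p a) = (0 < sigma i a)) &
      forall i, EU w (pfun p) i - EU u sigma i < 2 * (1 + EUdev_lip u) * rho].
Proof.
move=> HN Href Hm Hg rho_gt0 rho_le1 rho_m rho_g Hw hp Hroot.
have sigma_le2 j (b : A j) : `|sigma j b| <= 2.
  by have := mixed_le1 HN.1 b; rewrite ger0_norm ?HN.1.1 //; lra.
have p_sigma j (b : A j) : `|pfun p b - sigma j b| <= rho.
  by rewrite -(pfun_sigvec b HN.1) distrC; apply: le_trans _ hp; apply: pfun_dist.
set c := EUdev_lip u * (rho + rho).
have Hclose i (b : A i) : `|EUdev w (pfun p) b - EUdev u sigma b| <= c.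
  exact: EUdev_close (ltW rho_gt0) rho_le1 (ltW rho_gt0) Hw sigma_le2 p_sigma.
have c_lt : c < 2 * (1 + EUdev_lip u) * rho by rewrite /c; lra.
have Hpos i (a : A i) : 0 < sigma i a -> 0 < pfun p a.
  move=> sa; have := Hm i a sa; have := p_sigma i a.
  by rewrite ler_norml => /andP[h _]; lra.
have Hgap i (a : A i) : ~~ (0 < sigma i a) ->
    2 * c < EUdev u sigma (ref i) - EUdev u sigma a.
  by move=> sa; have := Hg i a sa; lra.
split; first exact: nash_charf_root HN Href Hroot Hpos Hclose Hgap.
  exact: support_charf_root.
by move=> i; apply: le_lt_trans (EU_charf_root_le HN Href Hroot Hpos Hclose Hgap i) c_lt.
Qed.

Theorem theorem1 (R : realType) (I : finType) (A : I -> finType)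
  (u : I -> profile A -> R) (sigma : forall i, A i -> R) :
  nondeg_NE u sigma ->
  forall eps : R, 0 < eps ->
  exists2 delta : R, 0 < delta &
    forall u' : I -> profile A -> R, game_dist u u' < delta ->
    exists sigma' : forall i, A i -> R,
      [/\ nash_eq u' sigma',
          (forall (i : I) (a : A i), (0 < sigma' i a) = (0 < sigma i a)) &
          (forall i : I, EU u' sigma' i - EU u sigma i < eps)].
Proof.
move=> [HN [ref [Href [Hdet Hgap]]]] eps eps_gt0.
have [k k_ge1 Hsolve] := charf_locally_solvable HN.1 Hdet.
have k_gt0 : 0 < k := lt_le_trans ltr01 k_ge1.
have [m m_gt0 Hm] := @fin_pos_lower_bound R _
  (fun x : {i : I & A i} => 0 < sigma (tag x) (tagged x)) _ (fun x sx => sx).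
have [g g_gt0 Hg] := @fin_pos_lower_bound R _
  (fun x : {i : I & A i} => ~~ (0 < sigma (tag x) (tagged x))) _ (fun x sx => Hgap _ _ sx).
pose L := 1 + EUdev_lip u; have L_gt0 : 0 < L by rewrite ltr_pwDl ?EUdev_lip_ge0.
pose rho := Num.min (Num.min k^-1 (m / 2)) (Num.min (g / (4 * L)) (eps / (4 * L))).
have rho_gt0 : 0 < rho by rewrite /rho !lt_min invr_gt0 k_gt0 !divr_gt0 // mulr_gt0.
have [[rho_k rho_m] [rho_g rho_eps]] : (rho * k <= 1 /\ rho * 2 <= m) /\
    (rho * (4 * L) <= g /\ rho * (4 * L) <= eps).
  by rewrite -!ler_pdivlMr ?mulr_gt0 // mul1r !ge_min !lexx ?orbT.
exists (rho / k) => [|w Hgd]; first by rewrite divr_gt0.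
have Hw i b : `|w i b - u i b| <= rho / k.
  exact/ltW/(le_lt_trans (utility_le_game_dist u w i b)).
have [p [hp Hroot]] := Hsolve rho w rho_gt0 rho_k Hw.
have rho_le1 : rho <= 1 by nra.
have Hw' i b : `|w i b - u i b| <= rho.
  by apply: le_trans (Hw i b) _; rewrite ler_pdivrMr // ler_peMr // ltW.
have [Hnash Hsupp Hpay] := equilibrium_of_close_root HN Href (fun i a => Hm (Tagged A a))
  (fun i a => Hg (Tagged A a)) rho_gt0 rho_le1 rho_m rho_g Hw' hp Hroot.
by exists (pfun p); split=> // i; apply: lt_le_trans (Hpay i) _; rewrite -/L; lra.
Qed.
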